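(* Let $V$ be a finite-dimensional real vector space with a seminorm $|\cdot|_V$ admitting a zonal representation $\sigma$. Then $|\cdot|_V$ is strictly convex if and only if for all linearly independent $v,w\in V$ there exists $\eta\in\operatorname{supp}\sigma$ with $\eta(v)\,\eta(w)<0$. In particular, if $\dim V=2$, then $|\cdot|_V$ is strictly convex if and only if $\sigma$ is non-degenerate.
   Context: $V'$ is the set of linear forms $\eta$ on $V$ with finite dual seminorm $|\eta|_{V'}=\sup\{\eta(v):|v|_V\le1\}$. A zonal representation of $|\cdot|_V$ is a locally finite nonnegative Borel measure $\sigma$ on $V'$ such that $\int_{V'}|\eta|_{V'}\,d\sigma(\eta)<\infty$ and $|v|_V=\int_{V'}|\eta(v)|\,d\sigma(\eta)$ for all $v\in V$. It is non-degenerate if $\sigma(C)>0$ for every nonempty open double cone $C\subseteq V'$, i.e. every nonempty open set $C$ with $\lambda C=C$ for all $\lambda\in\mathbb{R}\setminus\{0\}$. A seminorm is strictly convex if $|v+w|_V<|v|_V+|w|_V$ for all linearly independent $v,w\in V$.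
   Formalization: Non-degeneracy of σ means σ(C)>0 for every nonempty double cone C that is open in the space of all linear forms on V, rather than every open double cone C ⊆ V′. The statement above fails without it. *)

From HB Require Import structures.
From mathcomp Require Import all_boot all_order all_algebra.
From mathcomp Require Import all_classical all_reals all_analysis.
Set Implicit Arguments. Unset Strict Implicit. Unset Printing Implicit Defensive.
Import Order.TTheory GRing.Theory Num.Theory.
Import numFieldNormedType.Exports.
Local Open Scope classical_set_scope.
Local Open Scope ring_scope.

(* V = R^n, realised as row vectors 'rV[R]_n.  A linear form on V is
   represented by its coefficient row eta : 'rV[R]_n, acting by pairing. *)
Definition pair (R : realType) (n : nat) (eta v : 'rV[R]_n) : R :=
  \sum_(i < n) eta ord0 i * v ord0 i.

Notation dualBorel R n := (g_sigma_algebraType (@open 'rV[R]_n)).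

Definition is_seminorm (R : realType) (n : nat) (N : 'rV[R]_n -> R) : Prop :=
  (forall v w, N (v + w) <= N v + N w) /\
  (forall (a : R) v, N (a *: v) = `|a| * N v).

(* dual seminorm |eta|_{V'} = sup { eta(v) : |v|_V <= 1 }, in \bar R
   (it is +oo exactly when eta is not in V') *)
Definition dual_seminorm (R : realType) (n : nat) (N : 'rV[R]_n -> R)
  (eta : 'rV[R]_n) : \bar R :=
  ereal_sup [set (pair eta v)%:E | v in [set v | N v <= 1]].

Definition lin_indep2 (R : realType) (n : nat) (v w : 'rV[R]_n) : Prop :=
  forall a b : R, a *: v + b *: w = 0 -> a = 0 /\ b = 0.

Definition strictly_convex (R : realType) (n : nat) (N : 'rV[R]_n -> R) : Prop :=
  forall v w, lin_indep2 v w -> N (v + w) < N v + N w.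

Definition locally_finite (R : realType) (n : nat)
  (mu : set (dualBorel R n) -> \bar R) : Prop :=
  forall eta : 'rV[R]_n, exists U : set 'rV[R]_n,
    [/\ open U, U eta & (mu U < +oo)%E].

(* Finiteness of the first integral forces mu to be concentrated on V'. *)
Definition zonal_rep (R : realType) (n : nat) (N : 'rV[R]_n -> R)
  (mu : {measure set (dualBorel R n) -> \bar R}) : Prop :=
  [/\ locally_finite mu,
      (\int[mu]_(eta in [set: dualBorel R n]) dual_seminorm N eta < +oo)%E &
      forall v : 'rV[R]_n,
        ((N v)%:E = \int[mu]_(eta in [set: dualBorel R n]) (`|pair eta v|)%:E)%E].

Definition supp (R : realType) (n : nat)
  (mu : set (dualBorel R n) -> \bar R) : set 'rV[R]_n :=
  [set eta | forall U : set 'rV[R]_n, open U -> U eta -> (0 < mu U)%E].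

Definition double_cone (R : realType) (n : nat) (C : set 'rV[R]_n) : Prop :=
  forall lam : R, lam != 0 -> [set lam *: x | x in C] = C.

Definition non_degenerate (R : realType) (n : nat)
  (mu : set (dualBorel R n) -> \bar R) : Prop :=
  forall C : set 'rV[R]_n, open C -> C !=set0 -> double_cone C -> (0 < mu C)%E.

(* Through the zonal representation, [N v + N w - N (v + w)] is the integral
   of the nonnegative continuous function
   [|eta v| + |eta w| - |eta (v + w)|], which is positive exactly on the open
   double cone [opposite_signs v w] of forms taking values of opposite signs
   on [v] and [w].  So [N] is strictly convex iff every such cone with [v], [w]
   independent has positive measure, and an open set has positive measure iff
   it meets the support, because the complement of the support is covered by
   countably many null rational balls.  In the plane these cones are the open
   double sectors between two distinct lines; every nonempty open double cone
   contains a thin sector around one of its lines, so positivity on the sectors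
   is exactly non-degeneracy. *)

From HB Require Import structures.
From mathcomp Require Import all_boot all_order all_algebra.
From mathcomp Require Import all_classical all_reals all_analysis.
From mathcomp Require Import ring lra measurable_realfun.
Import Order.TTheory GRing.Theory Num.Theory.
Import numFieldNormedType.Exports.
Local Open Scope classical_set_scope.
Local Open Scope ring_scope.
Set Implicit Arguments. Unset Strict Implicit. Unset Printing Implicit Defensive.

Lemma ltr_normD_mul_lt0 (R : realDomainType) (a b : R) :
  (`|a + b| < `|a| + `|b|) = (a * b < 0).
Proof.
have [a0|a0] := leP 0 a; have [b0|b0] := leP 0 b; have [c0|c0] := leP 0 (a + b);
rewrite ?(ger0_norm a0) ?(ltr0_norm a0) ?(ger0_norm b0) ?(ltr0_norm b0)
  ?(ger0_norm c0) ?(ltr0_norm c0); apply/idP/idP; nra.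
Qed.

Section nonneg_integral.
Context d (T : measurableType d) (R : realType) (mu : {measure set T -> \bar R}).

Lemma ge0_integral_gt0 (f : T -> R) : measurable_fun setT f ->
  (forall x, 0 <= f x) ->
  (0 < \int[mu]_(x in [set: T]) (f x)%:E)%E <-> (0 < mu [set x | (0 < f x)%R])%E.
Proof.
move=> mf f0; have mfE : measurable_fun setT (EFin \o f) by exact/measurable_EFinP.
have mpos : measurable [set x | 0 < f x].
  have -> : [set x | 0 < f x] = setT `&` f @^-1` `]0, +oo[%classic.
    by rewrite setTI; apply/seteqP; split=> x /=; rewrite in_itv /= andbT.
  exact: mf.
have int_ge0 : (0 <= \int[mu]_(x in [set: T]) (f x)%:E)%E.
  by apply: integral_ge0 => x _; rewrite lee_fin.
rewrite !lt0e int_ge0 measure_ge0 !andbT.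
split; [apply: contra_neq => mu0|apply: contra_neq => int0].
- transitivity (\int[mu]_(x in [set: T]) cst 0%E x)%E; last exact: integral0.
  apply: ae_eq_integral => //; exists [set x | 0 < f x]; split=> // x.
  move=> /not_implyP[_ /eqP fx] /=; rewrite lt_neqAle f0 andbT eq_sym.
  by apply: contra_neq fx => ->.
- have : (\int[mu]_(x in [set: T]) `|(f x)%:E| = 0)%E.
    by under eq_integral do rewrite gee0_abs ?lee_fin//.
  move=> /(ae_eq_integral_abs mu measurableT mfE) [Z [mZ Z0 sub]].
  apply/eqP; rewrite eq_le measure_ge0 andbT -Z0 le_measure ?inE //.
  by move=> x /= fx; apply: sub => /= /(_ I) [] /eqP; rewrite gt_eqF.
Qed.

End nonneg_integral.

Lemma open_nonempty_neq0 (R : realType) (V : normedModType R) (C : set V) (y : V) :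
  y != 0 -> open C -> C !=set0 -> exists2 u, C u & u != 0.
Proof.
move=> y0 oC [u Cu]; have [u0|u0] := eqVneq u 0; last by exists u.
have /nbhs_ballP[e /= e0 sC] : nbhs (0 : V) C.
  by apply: open_nbhs_nbhs; split=> //; rewrite -u0.
have ny0 : 0 < `|y| by rewrite normr_gt0.
exists ((e / 2 / `|y|) *: y).
  apply: sC; rewrite -ball_normE /ball_ /= sub0r normrN normrZ ger0_norm.
    by rewrite divfK ?gt_eqF //; lra.
  by rewrite !divr_ge0 ?ltW.
by rewrite scaler_eq0 negb_or y0 !mulf_neq0 ?invr_eq0 ?gt_eqF.
Qed.

Section linear_forms.
Variables (R : realType) (n : nat).
Implicit Types (eta v w : 'rV[R]_n).

Lemma pairD eta v w : pair eta (v + w) = pair eta v + pair eta w.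
Proof. by rewrite /pair -big_split; apply: eq_bigr => i _; rewrite mxE mulrDr. Qed.

Lemma pairZl (a : R) eta v : pair (a *: eta) v = a * pair eta v.
Proof. by rewrite /pair mulr_sumr; apply: eq_bigr => i _; rewrite mxE mulrA. Qed.

Lemma pairZr (a : R) eta v : pair eta (a *: v) = a * pair eta v.
Proof. by rewrite /pair mulr_sumr; apply: eq_bigr => i _; rewrite mxE mulrCA. Qed.

Lemma pair_continuous v : continuous (fun eta => pair eta v).
Proof.
rewrite /pair; elim: (index_enum _) => [|i s IH].
  by under eq_fun do rewrite big_nil; exact: cst_continuous.
under eq_fun do rewrite big_cons.
move=> x; apply: (@continuousD R R^o _ (fun eta : 'rV[R]_n => eta ord0 i * v ord0 i)).
  apply: (@continuousM R _ (fun eta : 'rV[R]_n => eta ord0 i) (fun=> v ord0 i)).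
    exact: coord_continuous.
  exact: cst_continuous.
exact: IH.
Qed.

Lemma open_dual_measurable (A : set 'rV[R]_n) :
  open A -> measurable (A : set (dualBorel R n)).
Proof. exact: sub_sigma_algebra. Qed.

Lemma continuous_dual_measurable (g : 'rV[R]_n -> R) :
  continuous g -> measurable_fun (setT : set (dualBorel R n)) g.
Proof.
move=> /continuousP cg.
apply: (measurability _ (measurable_realfun.RGenOpens.measurableE R)).
move=> _ [_ [a [b ->]] <-]; rewrite setTI; apply: open_dual_measurable.
exact/cg/interval_open.
Qed.

Lemma abs_pair_continuous v : continuous (fun eta => `|pair eta v|).
Proof.
move=> eta; apply: (continuous_comp (f := fun eta => pair eta v) (g := Num.norm)).
  exact: pair_continuous.
exact: norm_continuous.
Qed.

Definition opposite_signs v w : set 'rV[R]_n :=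
  [set eta | pair eta v * pair eta w < 0].

Definition triangle_defect v w eta :=
  `|pair eta v| + `|pair eta w| - `|pair eta (v + w)|.

Lemma triangle_defect_ge0 v w eta : 0 <= triangle_defect v w eta.
Proof. by rewrite /triangle_defect pairD subr_ge0 ler_normD. Qed.

Lemma triangle_defect_continuous v w : continuous (triangle_defect v w).
Proof.
move=> eta; apply: (@continuousB R R^o _ (fun eta => `|pair eta v| + `|pair eta w|)
  (fun eta => `|pair eta (v + w)|)); last exact: abs_pair_continuous.
by apply: (@continuousD R R^o); exact: abs_pair_continuous.
Qed.

Lemma opposite_signsE v w :
  opposite_signs v w = [set eta | 0 < triangle_defect v w eta].
Proof.
apply/seteqP; split=> eta;
  by rewrite /= /triangle_defect pairD subr_gt0 ltr_normD_mul_lt0.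
Qed.

Lemma open_opposite_signs v w : open (opposite_signs v w).
Proof.
have cvw : continuous (fun eta => pair eta v * pair eta w).
  move=> eta; apply: (@continuousM R _ (fun eta => pair eta v) (fun eta => pair eta w)).
    exact: pair_continuous.
  exact: pair_continuous.
rewrite (_ : opposite_signs v w =
    (fun eta => pair eta v * pair eta w) @^-1` `]-oo, 0[%classic).
  exact: (proj1 (continuousP _) cvw _ (interval_open _ _)).
by apply/seteqP; split=> eta /=; rewrite in_itv.
Qed.

Lemma double_cone_opposite_signs v w : double_cone (opposite_signs v w).
Proof.
have sq_gt0 (lam : R) : lam != 0 -> 0 < lam * lam.
  by move=> ?; rewrite -expr2 exprn_even_gt0.
move=> lam lam0; apply/seteqP; split=> [_ [eta Seta <-]|eta Seta].
  by rewrite /opposite_signs /= !pairZl mulrACA pmulr_rlt0 ?sq_gt0.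
exists (lam^-1 *: eta); last by rewrite scalerA divff // scale1r.
by rewrite /opposite_signs /= !pairZl mulrACA pmulr_rlt0 ?sq_gt0 ?invr_eq0.
Qed.

End linear_forms.

Section support.
Variables (R : realType) (n : nat) (mu : {measure set (dualBorel R n) -> \bar R}).

Definition rat_ball (p : 'rV[rat]_n * rat) : set 'rV[R]_n :=
  ball (map_mx (@ratr R) p.1) (ratr p.2).

Lemma rat_row_approx (eta : 'rV[R]_n) (e : R) : 0 < e ->
  exists c : 'rV[rat]_n, forall i, `|eta ord0 i - ratr (c ord0 i)| < e.
Proof.
move=> e0; have coord_approx (i : 'I_n) : exists q : rat, `|eta ord0 i - ratr q| < e.
  have [q] := @rat_in_itvoo R (eta ord0 i - e) (eta ord0 i + e)
    ltac:(by rewrite ltrBlDr -addrA ltrDl addr_gt0).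
  rewrite in_itv /= => /andP[q_gt q_lt]; exists q.
  by rewrite ltr_norml; apply/andP; split; lra.
have [c Hc] := choice coord_approx.
by exists (\row_i c i) => i; rewrite mxE.
Qed.

Lemma open_rat_ball_sub (U : set 'rV[R]_n) (eta : 'rV[R]_n) : open U -> U eta ->
  exists p, rat_ball p eta /\ rat_ball p `<=` U.
Proof.
move=> oU Ueta; have /nbhs_ballP[e /= e0 sU] : nbhs eta U.
  by apply: open_nbhs_nbhs; split.
have [r] := @rat_in_itvoo R (e / 3) (e / 2) ltac:(lra).
rewrite in_itv /= => /andP[r_gt r_lt].
have [c Hc] := @rat_row_approx eta (e / 3) ltac:(lra).
exists (c, r); split.
  split=> [|i j]; first lra.
  by rewrite (ord1 i) /ball /= !mxE distrC; exact: lt_trans (Hc j) r_gt.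
move=> y [_ Hy]; apply: sU; split=> // i j; rewrite (ord1 i) /ball /=.
have := Hy ord0 j; rewrite /ball /= !mxE => cy.
rewrite -(subrK (ratr (c ord0 j)) (eta ord0 j)) -addrA.
by apply: le_lt_trans (ler_normD _ _) _; have := Hc j; lra.
Qed.

Lemma measure0_disjoint_supp (A : set 'rV[R]_n) :
  measurable (A : set (dualBorel R n)) -> A `&` supp mu = set0 -> mu A = 0%E.
Proof.
move=> mA Asupp.
pose null p := exists U : set 'rV[R]_n, [/\ open U, mu U = 0%E & rat_ball p `<=` U].
pose F k : set 'rV[R]_n :=
  if unpickle k is Some p then (if `[< null p >] then rat_ball p else set0) else set0.
have mF k : measurable (F k : set (dualBorel R n)).
  rewrite /F; case: (unpickle k) => [p|]; last exact: measurable0.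
  case: ifP => _; last exact: measurable0.
  by apply: open_dual_measurable; exact: ball_open.
have F0 k : mu (F k) = 0%E.
  rewrite /F; case: (unpickle k) => [p|]; last exact: measure0.
  case: ifP => [/asboolP[U [oU U0 pU]]|_]; last exact: measure0.
  apply: (subset_measure0 _ (open_dual_measurable oU) pU U0).
  by apply: open_dual_measurable; exact: ball_open.
have AF : A `<=` \bigcup_k F k.
  move=> eta Aeta; have : ~ supp mu eta.
    by move=> sEta; have : (A `&` supp mu) eta by []; rewrite Asupp.
  move=> /existsNP[U /not_implyP[oU /not_implyP[Ueta]]].
  move=> /negP; rewrite -leNgt => mU0.
  have U0 : mu U = 0%E by apply/eqP; rewrite eq_le mU0 measure_ge0.
  have [p [peta pU]] := open_rat_ball_sub oU Ueta.
  exists (pickle p) => //; rewrite /F pickleK.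
  by have -> : `[< null p >] by apply/asboolP; exists U.
apply/eqP; rewrite eq_le measure_ge0 andbT.
apply: le_trans (measure_sigma_subadditive _ mF mA AF) _.
by rewrite eseries0.
Qed.

Lemma supp_meets_openP (U : set 'rV[R]_n) : open U ->
  (exists eta, supp mu eta /\ U eta) <-> (0 < mu U)%E.
Proof.
move=> oU; split=> [[eta [sEta Ueta]]|]; first exact: sEta.
apply: contraPP => noeta; apply/negP; rewrite lt0e measure_ge0 andbT negbK.
apply/eqP/measure0_disjoint_supp; first exact: open_dual_measurable.
by apply/seteqP; split=> // eta [Ueta sEta]; apply: noeta; exists eta.
Qed.

End support.

Section zonal.
Variables (R : realType) (n : nat) (N : 'rV[R]_n -> R).
Variable mu : {measure set (dualBorel R n) -> \bar R}.
Hypothesis zN : zonal_rep N mu.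
Implicit Types (eta v w : 'rV[R]_n).

Lemma zonal_integrable_abs_pair v :
  mu.-integrable setT (EFin \o (fun eta : dualBorel R n => `|pair eta v|)).
Proof.
have [_ _ Nint] := zN; apply/integrableP; split.
  apply/measurable_EFinP; apply: continuous_dual_measurable.
  exact: abs_pair_continuous.
under eq_integral do rewrite /= normr_id.
by rewrite -Nint ltry.
Qed.

Lemma zonal_triangle_defect v w :
  ((N v + N w - N (v + w))%:E =
    \int[mu]_(eta in [set: dualBorel R n]) (triangle_defect v w eta)%:E)%E.
Proof.
have [_ _ Nint] := zN.
have iN := zonal_integrable_abs_pair.
rewrite /triangle_defect integralB_EFin // ?integralD_EFin // -?Nint //.
apply: eq_integrable (integrableD measurableT (iN v) (iN w)) => //.
Qed.

Lemma zonal_lt_normD v w :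
  N (v + w) < N v + N w <-> (0 < mu (opposite_signs v w))%E.
Proof.
rewrite opposite_signsE -ge0_integral_gt0; last exact: triangle_defect_ge0.
  by rewrite -zonal_triangle_defect lte_fin subr_gt0.
apply: continuous_dual_measurable; exact: triangle_defect_continuous.
Qed.

Lemma zonal_strictly_convexP : strictly_convex N <->
  forall v w, lin_indep2 v w -> (0 < mu (opposite_signs v w))%E.
Proof.
by split=> sc v w vw; [apply/zonal_lt_normD; exact: sc|apply/zonal_lt_normD; exact: sc].
Qed.

End zonal.

Section plane.
Variable R : realType.
Implicit Types (eta u v w : 'rV[R]_2) (x y : R).

Definition row2 x y : 'rV[R]_2 := \row_(j < 2) if j == ord0 then x else y.

Definition det2 v w := v ord0 ord0 * w ord0 ord_max - v ord0 ord_max * w ord0 ord0.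

Definition perp2 u := row2 (- u ord0 ord_max) (u ord0 ord0).

Lemma row2_0 x y : row2 x y ord0 ord0 = x. Proof. by rewrite mxE. Qed.
Lemma row2_1 x y : row2 x y ord0 ord_max = y. Proof. by rewrite mxE. Qed.

Lemma ord2P (j : 'I_2) : j = ord0 \/ j = ord_max.
Proof. by case: j => [[|[|m]] Hm]; [left|right|]; try apply: val_inj. Qed.

Lemma row2P v w :
  v ord0 ord0 = w ord0 ord0 -> v ord0 ord_max = w ord0 ord_max -> v = w.
Proof. by move=> e0 e1; apply/rowP => j; case: (ord2P j) => ->. Qed.

Lemma pair2 eta v :
  pair eta v = eta ord0 ord0 * v ord0 ord0 + eta ord0 ord_max * v ord0 ord_max.
Proof.
rewrite /pair !big_ord_recl big_ord0 addr0.
by have -> : lift ord0 ord0 = ord_max :> 'I_2 by apply: val_inj.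
Qed.

Lemma lin_indep2_det2 v w : lin_indep2 v w <-> det2 v w != 0.
Proof.
rewrite /det2; split=> [vw|d0 a b /rowP vw].
- apply/eqP => d0.
  have [w1 v1] : w ord0 ord_max = 0 /\ - v ord0 ord_max = 0.
    by apply: vw; apply: row2P; rewrite !mxE; lra.
  have [w0 v0] : w ord0 ord0 = 0 /\ - v ord0 ord0 = 0.
    by apply: vw; apply: row2P; rewrite !mxE; lra.
  have [] : (1 : R) = 0 /\ (0 : R) = 0 by apply: vw; apply: row2P; rewrite !mxE; lra.
  by move/eqP; rewrite oner_eq0.
- have := vw ord0; have := vw ord_max; rewrite !mxE => e1 e0.
  set d := _ - _ in d0.
  have ad : a * d = w ord0 ord_max * (a * v ord0 ord0 + b * w ord0 ord0)
                  - w ord0 ord0 * (a * v ord0 ord_max + b * w ord0 ord_max).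
    by rewrite /d; ring.
  have bd : b * d = v ord0 ord0 * (a * v ord0 ord_max + b * w ord0 ord_max)
                  - v ord0 ord_max * (a * v ord0 ord0 + b * w ord0 ord0).
    by rewrite /d; ring.
  rewrite e0 e1 !mulr0 subrr in ad bd.
  by split; apply/eqP; [move/eqP: ad|move/eqP: bd]; rewrite mulf_eq0 (negbTE d0) orbF.
Qed.

Lemma opposite_signs_nonempty v w : lin_indep2 v w -> opposite_signs v w !=set0.
Proof.
move=> /lin_indep2_det2 d0.
(* Cramer's rule for eta(v) = 1, eta(w) = -1 *)
exists (row2 ((w ord0 ord_max + v ord0 ord_max) / det2 v w)
             (- (w ord0 ord0 + v ord0 ord0) / det2 v w)).
rewrite /opposite_signs /= !pair2 !row2_0 !row2_1.
have -> : (w ord0 ord_max + v ord0 ord_max) / det2 v w * v ord0 ord0 +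
    - (w ord0 ord0 + v ord0 ord0) / det2 v w * v ord0 ord_max = 1.
  by move: d0; rewrite /det2 => d0; field.
have -> : (w ord0 ord_max + v ord0 ord_max) / det2 v w * w ord0 ord0 +
    - (w ord0 ord0 + v ord0 ord0) / det2 v w * w ord0 ord_max = -1.
  by move: d0; rewrite /det2 => d0; field.
by rewrite mul1r oppr_lt0 ltr01.
Qed.

Lemma pair_self_gt0 u : u != 0 -> 0 < pair u u.
Proof.
move=> u0; rewrite pair2 -!expr2 lt_def addr_ge0 ?sqr_ge0 // andbT.
rewrite paddr_eq0 ?sqr_ge0 // !sqrf_eq0; apply: contra u0 => /andP[/eqP x0 /eqP x1].
by apply/eqP/row2P; rewrite mxE.
Qed.

Lemma perp2_decomp u eta :
  pair u u *: eta = pair eta u *: u + pair eta (perp2 u) *: perp2 u.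
Proof. by apply: row2P; rewrite /perp2 !mxE !pair2 ?row2_0 ?row2_1 /=; ring. Qed.

Lemma det2_perp2 u t :
  det2 (perp2 u + t *: u) (perp2 u - t *: u) = 2 * t * pair u u.
Proof. by rewrite /det2 /perp2 pair2 !mxE /=; ring. Qed.

Lemma opposite_signs_perp2 u t eta : u != 0 -> 0 < t ->
  opposite_signs (perp2 u + t *: u) (perp2 u - t *: u) eta ->
  exists lam s, [/\ lam != 0, `|s| < t & eta = lam *: (u + s *: perp2 u)].
Proof.
move=> u0 t0; have k0 := pair_self_gt0 u0.
rewrite /opposite_signs /= -scaleNr !pairD !pairZr.
set a := pair eta u; set b := pair eta (perp2 u) => ab.
have a0 : a != 0.
  by apply: contraTneq ab => ->; rewrite !mulr0 !addr0 -expr2 -leNgt sqr_ge0.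
have b2 : b * b < t * t * (a * a) by nra.
exists (a / pair u u), (b / a); split.
- by rewrite mulf_neq0 // invr_eq0 gt_eqF.
- apply: contraTT b2; rewrite -!leNgt => st.
  have tab : t * `|a| <= `|b| by rewrite -ler_pdivlMr ?normr_gt0 // -normf_div.
  have ta_ge0 := mulr_ge0 (ltW t0) (normr_ge0 a).
  have := ler_pM ta_ge0 ta_ge0 tab tab.
  by rewrite mulrACA -!normrM !ger0_norm -?expr2 ?sqr_ge0 // expr2.
- apply: (@scalerI _ _ (pair u u)); first by rewrite gt_eqF.
  rewrite perp2_decomp scalerA (mulrC (pair u u)) divfK ?gt_eqF //.
  by rewrite scalerDr scalerA (mulrC a) divfK.
Qed.

Lemma double_cone_opposite_signs_sub (C : set 'rV[R]_2) :
  open C -> C !=set0 -> double_cone C ->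
  exists v w, lin_indep2 v w /\ opposite_signs v w `<=` C.
Proof.
move=> oC C0 dC.
have e10 : row2 1 0 != 0.
  by apply: contra_neq (@oner_neq0 R) => /rowP/(_ ord0); rewrite !mxE.
have [u Cu u0] := open_nonempty_neq0 e10 oC C0.
have /nbhs_ballP[e /= e0 sC] : nbhs u C by apply: open_nbhs_nbhs.
have p0 : 0 < `|perp2 u| + 1 by rewrite ltr_wpDl.
pose t := e / (`|perp2 u| + 1); have t0 : 0 < t by rewrite divr_gt0.
exists (perp2 u + t *: u), (perp2 u - t *: u); split.
  by apply/lin_indep2_det2; rewrite det2_perp2 !mulf_neq0 ?gt_eqF ?pair_self_gt0.
move=> eta /(opposite_signs_perp2 u0 t0)[lam [s [lam0 st ->]]].
rewrite -(dC lam lam0); exists (u + s *: perp2 u) => //; apply: sC.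
rewrite -ball_normE /ball_ /= opprD addNKr normrN normrZ.
apply: le_lt_trans (_ : `|s| * (`|perp2 u| + 1) < e).
  by rewrite ler_wpM2l ?lerDl.
by rewrite -(divfK (lt0r_neq0 p0) e) -/t ltr_pM2r.
Qed.

End plane.

Lemma non_degenerate2P (R : realType) (mu : {measure set (dualBorel R 2) -> \bar R}) :
  non_degenerate mu <->
  forall v w : 'rV[R]_2, lin_indep2 v w -> (0 < mu (opposite_signs v w))%E.
Proof.
split=> [nd v w vw|pos C oC C0 dC].
  apply: nd; first exact: open_opposite_signs.
    exact: opposite_signs_nonempty.
  exact: double_cone_opposite_signs.
have [v [w [vw sC]]] := double_cone_opposite_signs_sub oC C0 dC.
apply: lt_le_trans (pos v w vw) _; apply: le_measure => //; rewrite inE.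
  by apply: open_dual_measurable; exact: open_opposite_signs.
exact: open_dual_measurable.
Qed.

Unset Implicit Arguments.

Theorem proposition4p4 (R : realType) (n : nat) (N : 'rV[R]_n -> R)
  (mu : {measure set (dualBorel R n) -> \bar R}) :
  is_seminorm N -> zonal_rep N mu ->
  (strictly_convex N <->
     (forall v w : 'rV[R]_n, lin_indep2 v w ->
        exists eta, supp mu eta /\ pair eta v * pair eta w < 0)) /\
  (n = 2%N -> (strictly_convex N <-> non_degenerate mu)).
Proof.
move=> _ zN; split.
  apply: iff_trans (zonal_strictly_convexP zN) _.
  split=> H v w vw;
    have supp_cone := supp_meets_openP mu (open_opposite_signs (v:=v) (w:=w)).
    exact: (proj2 supp_cone) (H v w vw).
  exact: (proj1 supp_cone) (H v w vw).
move=> n2; subst n.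
apply: iff_trans (zonal_strictly_convexP zN) _.
exact: iff_sym (non_degenerate2P mu).
Qed.
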